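(* For $(u,\rho)\in H_{0,\infty}(\mathbb R)\times L^2_{\rm const}(\mathbb R)$ let $X_e(x)=(x,\bar u(x),c,1,u_x(x),u_x^2(x)+\bar\rho^2(x),\bar\rho(x),k)$ and write $g(u,\rho)$ for the function $x\mapsto g(X_e(x))$. Then $g(u,\rho)-1\in L^1(\mathbb R)$, and: (i) If $(u_1,\rho_1),(u_2,\rho_2)\in H_{0,\infty}(\mathbb R)\times L^2_{\rm const}(\mathbb R)$ satisfy $\operatorname{meas}(\{x:(\rho_1(x)=0\text{ and }\rho_2(x)\ne0)\text{ or }(\rho_1(x)\ne0\text{ and }\rho_2(x)=0)\})=0$, then $$\|g(u_1,\rho_1)-g(u_2,\rho_2)\|_{L^1}\le C\big(\|u_{1,x}-u_{2,x}\|_{L^2}+\|\bar\rho_1-\bar\rho_2\|_{L^2}\big),$$ where $C$ depends only on the $L^2$-norms of $u_{1,x},u_{2,x},\bar\rho_1,\bar\rho_2$. (ii) If $(u_n,\rho_n)\to(u,\rho)$ in $H_{0,\infty}(\mathbb R)\times L^2_{\rm const}(\mathbb R)$ and for all $n$, $\operatorname{meas}(\{x:(\rho(x)=0\text{ and }\rho_n(x)\ne0)\text{ or }(\rho(x)\ne0\text{ and }\rho_n(x)=0)\})=0$, then $g(u_n,\rho_n)-1\to g(u,\rho)-1$ in $L^1(\mathbb R)$.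
   Context: Fix a smooth $\chi:\mathbb R\to\mathbb R$ with $\chi'\ge0$, $\chi=0$ on $(-\infty,0]$, $\chi=1$ on $[1,\infty)$. $H_{0,\infty}(\mathbb R)=\{u=\bar u+c\chi:\bar u\in H^1(\mathbb R),c\in\mathbb R\}$ with norm $\|\bar u\|_{H^1}+|c|$; $L^2_{\rm const}(\mathbb R)=\{\rho=\bar\rho+k:\bar\rho\in L^2(\mathbb R),k\in\mathbb R\}$ with norm $\|\bar\rho\|_{L^2}+|k|$. For $x\in\mathbb R^8$: $g_1(x)=|x_5|+2|x_7x_8|+2x_4$, $g_2(x)=x_4+x_6$, $\Omega_1=\{x:g_1(x)\le g_2(x),\ x_5\le0,\ x_7+x_8x_4=0\}$, and $g=g_1$ on $\Omega_1$, $g=g_2$ on $\mathbb R^8\setminus\Omega_1$. *)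

From mathcomp Require Import all_boot all_order all_algebra.
From mathcomp Require Import all_classical all_reals all_analysis.
Import Order.TTheory GRing.Theory Num.Theory.
Set Implicit Arguments. Unset Strict Implicit. Unset Printing Implicit Defensive.
Local Open Scope ring_scope.
Local Open Scope classical_set_scope.

Section defs.
Context {R : realType}.
Local Notation mu := (@lebesgue_measure R).

Definition L2fun (f : R -> R) : Prop :=
  measurable_fun setT f /\ mu.-integrable setT (fun x => (f x ^+ 2)%:E).

Definition L2norm (f : R -> R) : R :=
  Num.sqrt (Rintegral mu setT (fun x => f x ^+ 2)).

Definition L1norm (f : R -> R) : R :=
  Rintegral mu setT (fun x => `|f x|).

(* f' is the (weak) derivative of f: f is the absolutely continuous
   primitive of f' *)
Definition weak_deriv (f f' : R -> R) : Prop :=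
  forall a b : R, a <= b -> f b - f a = Rintegral mu `[a, b] f'.

(* ubar in H^1(R) with derivative ubar' (1-d characterization of H^1) *)
Definition H1fun (f f' : R -> R) : Prop :=
  [/\ L2fun f, L2fun f' & weak_deriv f f'].

Definition H1norm (f f' : R -> R) : R :=
  Num.sqrt (L2norm f ^+ 2 + L2norm f' ^+ 2).

Definition smooth (f : R -> R) : Prop :=
  forall (n : nat) (x : R), derivable (iter n (fun h : R -> R => derive1 h) f) x 1.

Definition cutoff (chi : R -> R) : Prop :=
  [/\ smooth chi, (forall x, 0 <= derive1 chi x),
      (forall x, x <= 0 -> chi x = 0) & (forall x, 1 <= x -> chi x = 1)].

Definition g1 (x1 x2 x3 x4 x5 x6 x7 x8 : R) : R :=
  `|x5| + 2 * `|x7 * x8| + 2 * x4.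
Definition g2 (x1 x2 x3 x4 x5 x6 x7 x8 : R) : R := x4 + x6.
Definition Omega1 (x1 x2 x3 x4 x5 x6 x7 x8 : R) : bool :=
  [&& g1 x1 x2 x3 x4 x5 x6 x7 x8 <= g2 x1 x2 x3 x4 x5 x6 x7 x8,
      x5 <= 0 & x7 + x8 * x4 == 0].
Definition g (x1 x2 x3 x4 x5 x6 x7 x8 : R) : R :=
  if Omega1 x1 x2 x3 x4 x5 x6 x7 x8 then g1 x1 x2 x3 x4 x5 x6 x7 x8
  else g2 x1 x2 x3 x4 x5 x6 x7 x8.

(* u = ubar + c chi, u_x = ubar' + c chi' *)
Definition ux (chi ubar' : R -> R) (c : R) : R -> R :=
  fun x => ubar' x + c * derive1 chi x.

(* x |-> g(X_e(x)) for u = ubar + c chi, rho = rhobar + k *)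
Definition gfun (chi ubar ubar' : R -> R) (c : R) (rhobar : R -> R) (k : R)
  : R -> R :=
  fun x => let v := ux chi ubar' c x in
    g x (ubar x) c 1 v (v ^+ 2 + rhobar x ^+ 2) (rhobar x) k.

Definition zero_compat (rb1 : R -> R) (k1 : R) (rb2 : R -> R) (k2 : R) : Prop :=
  mu.-negligible [set x | (rb1 x + k1 = 0 /\ rb2 x + k2 <> 0)
                       \/ (rb1 x + k1 <> 0 /\ rb2 x + k2 = 0)].

End defs.

(* Write [G(a, r, k)] for the value of [g] at [X_e(x)] when [u_x(x) = a] and
   [rhobar(x) = r].  Off [Omega_1] one has [G = 1 + a^2 + r^2]; on [Omega_1],
   which forces [r + k = 0], [a <= 0] and [|a| >= 1], one has
   [G = |a| + 2 r^2 + 2].  Hence [0 <= G - 1 <= a^2 + r^2], so [g - 1] is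
   integrable.  If [r_1 + k_1] and [r_2 + k_2] vanish together, comparing the
   branches gives
   [|G_1 - G_2| <= 2 (|a_1| + |a_2|) |a_1 - a_2| + 2 (|r_1| + |r_2|) |r_1 - r_2|],
   and Cauchy-Schwarz turns this into (i) with [C] twice the sum of the four
   norms.  Since [chi'] is in [L^2], [u_x] depends Lipschitz-continuously on
   [(ubar, c)], so (ii) follows from (i). *)

From mathcomp Require Import all_boot all_order all_algebra.
From mathcomp Require Import all_classical all_reals all_analysis.
From mathcomp Require Import ring lra.
Import Order.TTheory GRing.Theory Num.Theory.
Import numFieldNormedType.Exports measurable_realfun.
Local Open Scope ring_scope.
Local Open Scope classical_set_scope.

Section elementary_inequalities.
Context {R : realFieldType}.
Implicit Types a b : R.

Lemma dist_sqr_le a b : `|a ^+ 2 - b ^+ 2| <= (`|a| + `|b|) * `|a - b|.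
Proof. by rewrite subr_sqr normrM mulrC ler_wpM2r// ler_normD. Qed.

Lemma dist_le_mul_of_norm_ge1 a b :
  1 <= `|a| -> `|a - b| <= (`|a| + `|b|) * `|a - b|.
Proof.
move=> a_ge1; rewrite -[leLHS]mul1r ler_wpM2r//.
by rewrite (le_trans a_ge1)// lerDl.
Qed.

Lemma sqr_le_of_sign_change a b :
  a <= 0 -> 0 <= b -> b ^+ 2 <= (`|a| + `|b|) * `|a - b|.
Proof.
move=> a_le0 b_ge0; rewrite (ger0_norm b_ge0) (ler0_norm a_le0) ler0_norm; nra.
Qed.

End elementary_inequalities.

Section pointwise_g.
Context {R : realType}.
Implicit Types a r k : R.

(* [g] ignores its first three arguments, so [gfun] factors through [gp]. *)
Definition gp a r k : R := g 0 0 0 1 a (a ^+ 2 + r ^+ 2) r k.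

Lemma gfunE (chi ub ub' : R -> R) c (rb : R -> R) k x :
  gfun chi ub ub' c rb k x = gp (ux chi ub' c x) (rb x) k.
Proof. by []. Qed.

Lemma gp_neq0 a r k : r + k != 0 -> gp a r k = 1 + (a ^+ 2 + r ^+ 2).
Proof. by move=> /negPf rk0; rewrite /gp /g /Omega1 mulr1 rk0 !andbF. Qed.

Lemma gp_eq0 a r k : r + k = 0 ->
  gp a r k = if (`|a| + 2 * r ^+ 2 + 2 <= 1 + (a ^+ 2 + r ^+ 2)) && (a <= 0)
             then `|a| + 2 * r ^+ 2 + 2 else 1 + (a ^+ 2 + r ^+ 2).
Proof.
move=> rk0; have -> : k = - r by lra.
rewrite /gp /g /Omega1 /g1 /g2 !mulr1 subrr eqxx andbT mulrN normrN normrM.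
by rewrite -expr2 real_normK ?num_real.
Qed.

Lemma norm_ge1_of_g1_le_g2 a r :
  `|a| + 2 * r ^+ 2 + 2 <= 1 + (a ^+ 2 + r ^+ 2) -> 1 <= `|a|.
Proof.
rewrite -[a ^+ 2](real_normK (num_real a)).
by have := normr_ge0 a; have := sqr_ge0 r; nra.
Qed.

Lemma gp_sub1_bounds a r k : 0 <= gp a r k - 1 <= a ^+ 2 + r ^+ 2.
Proof.
rewrite /gp /g /Omega1 /g1 /g2 mulr1.
have := sqr_ge0 a; have := sqr_ge0 r.
case: ifP => [/and3P[g1_le_g2 _ _]|_] *; last by apply/andP; split; lra.
by have := normr_ge0 a; have := normr_ge0 (r * k) => *; apply/andP; split; lra.
Qed.

(* On [Omega_1] we have [|a| >= 1], which controls [| |a_1| - |a_2| |]; a sign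
   change of [a] between the two points is paid for by [sqr_le_of_sign_change]. *)
Lemma gp_dist_le_eq0 a1 r1 k1 a2 r2 k2 : r1 + k1 = 0 -> r2 + k2 = 0 ->
  `|gp a1 r1 k1 - gp a2 r2 k2| <=
    2 * ((`|a1| + `|a2|) * `|a1 - a2|) + 2 * ((`|r1| + `|r2|) * `|r1 - r2|).
Proof.
move=> /gp_eq0-> /gp_eq0->.
have /ler_normlP[da1 da2] := dist_sqr_le a1 a2.
have /ler_normlP[dr1 dr2] := dist_sqr_le r1 r2.
have /ler_normlP[dn1 dn2] := ler_dist_dist a1 a2.
have := sqr_ge0 r1; have := sqr_ge0 r2.
have := normr_ge0 a1; have := normr_ge0 a2.
have := mulr_ge0 (addr_ge0 (normr_ge0 a1) (normr_ge0 a2)) (normr_ge0 (a1 - a2)).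
have := mulr_ge0 (addr_ge0 (normr_ge0 r1) (normr_ge0 r2)) (normr_ge0 (r1 - r2)).
have W1 := dist_le_mul_of_norm_ge1 a1 a2.
have W2 := dist_le_mul_of_norm_ge1 a2 a1.
have S1 := sqr_le_of_sign_change a1 a2.
have S2 := sqr_le_of_sign_change a2 a1.
rewrite distrC [`|a2| + _]addrC in W2 S2.
move=> *; apply/ler_normlP.
case: ifP => [/andP[/[dup]/norm_ge1_of_g1_le_g2/W1 w1 c1 s1]|/negbT];
  case: ifP => [/andP[/[dup]/norm_ge1_of_g1_le_g2/W2 w2 c2 s2]|/negbT].
- by split; lra.
- by rewrite negb_and -!ltNge => /orP[|/ltW /(S1 s1)] *; split; lra.
- by rewrite negb_and -!ltNge => /orP[|/ltW /(S2 s2)] *; split; lra.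
- by move=> _ _; split; lra.
Qed.

Lemma gp_dist_le a1 r1 k1 a2 r2 k2 : (r1 + k1 = 0 <-> r2 + k2 = 0) ->
  `|gp a1 r1 k1 - gp a2 r2 k2| <=
    2 * ((`|a1| + `|a2|) * `|a1 - a2|) + 2 * ((`|r1| + `|r2|) * `|r1 - r2|).
Proof.
move=> same_zero; have [rk1|rk1] := eqVneq (r1 + k1) 0.
  exact: gp_dist_le_eq0 rk1 (same_zero.1 rk1).
have rk2 : r2 + k2 != 0 by apply: contra_neq rk1 => /same_zero.2.
rewrite gp_neq0// gp_neq0// opprD addrACA subrr add0r opprD addrACA.
apply: le_trans (ler_normD _ _) _.
have := dist_sqr_le a1 a2; have := dist_sqr_le r1 r2.
have := mulr_ge0 (addr_ge0 (normr_ge0 a1) (normr_ge0 a2)) (normr_ge0 (a1 - a2)).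
have := mulr_ge0 (addr_ge0 (normr_ge0 r1) (normr_ge0 r2)) (normr_ge0 (r1 - r2)).
lra.
Qed.

End pointwise_g.

Lemma le_sqrt_mul_of_quadratic {R : rcfType} (P A B : R) :
  0 <= P -> 0 <= A -> 0 <= B -> (forall t, 2 * t * P <= t ^+ 2 * A + B) ->
  P <= Num.sqrt A * Num.sqrt B.
Proof.
move=> P0 A0 B0 quad.
rewrite -sqrtrM// -(ger0_norm P0) -sqrtr_sqr ler_sqrt ?mulr_ge0//.
have [->|P_neq0] := eqVneq P 0; first by rewrite expr0n/= mulr_ge0.
have P_gt0 : 0 < P by rewrite lt_neqAle eq_sym P_neq0.
have [A_eq0|A_neq0] := eqVneq A 0.
  have := quad ((B + 1) / (2 * P)); rewrite A_eq0 mulr0 add0r.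
  have -> : 2 * ((B + 1) / (2 * P)) * P = B + 1 by field.
  lra.
have A_gt0 : 0 < A by rewrite lt_neqAle eq_sym A_neq0.
have := quad (P / A).
have -> : 2 * (P / A) * P = 2 * (P ^+ 2 / A) by field.
have -> : (P / A) ^+ 2 * A = P ^+ 2 / A by field.
by move=> ?; rewrite mulrC -ler_pdivrMr//; lra.
Qed.

Section real_integrable.
Context {d} {T : measurableType d} {R : realType} {mu : {measure set T -> \bar R}}.
Implicit Types f h : T -> R.

Lemma integrableD_EFin {f h} :
  mu.-integrable setT (EFin \o f) -> mu.-integrable setT (EFin \o h) ->
  mu.-integrable setT (EFin \o (fun x => f x + h x)).
Proof. by move=> if_ ih; apply: eq_integrable (integrableD _ if_ ih). Qed.

Lemma integrableZl_EFin a {f} : mu.-integrable setT (EFin \o f) ->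
  mu.-integrable setT (EFin \o (fun x => a * f x)).
Proof. by move=> if_; apply: eq_integrable (integrableZl _ a if_). Qed.

Lemma integrable_le_EFin f h : measurable_fun setT f ->
  mu.-integrable setT (EFin \o h) -> (forall x, `|f x| <= h x) ->
  mu.-integrable setT (EFin \o f).
Proof.
move=> mf ih f_le_h; apply: le_integrable ih => //; first exact/measurable_EFinP.
by move=> x _ /=; rewrite lee_fin (le_trans (f_le_h x)) ?ler_norm.
Qed.

Lemma ae_le_Rintegral {f h} {N : set T} : measurable_fun setT f ->
  mu.-integrable setT (EFin \o h) -> (forall x, 0 <= f x) -> (forall x, 0 <= h x) ->
  mu.-negligible N -> (forall x, ~ N x -> f x <= h x) ->
  Rintegral mu setT f <= Rintegral mu setT h.
Proof.
move=> mf ih f0 h0 negN f_le_h.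
have le_int : (\int[mu]_x (f x)%:E <= \int[mu]_x (h x)%:E)%E.
  apply: ae_ge0_le_integral => //.
  - by move=> x _; rewrite lee_fin.
  - exact/measurable_EFinP.
  - by move=> x _; rewrite lee_fin.
  - by case/integrableP: ih.
  apply: (negligibleS _ negN) => x /= nfh; apply: contrapT => Nx.
  by apply: nfh => _; rewrite lee_fin f_le_h.
have h_fin := integrable_fin_num measurableT ih.
rewrite /Rintegral fine_le//.
rewrite ge0_fin_numE; last by apply: integral_ge0 => x _; rewrite lee_fin.
by apply: le_lt_trans le_int _; move: h_fin; rewrite fin_numElt => /andP[].
Qed.

End real_integrable.

Section L2.
Context {R : realType}.
Local Notation mu := (@lebesgue_measure R).
Implicit Types f h : R -> R.

Lemma L2fun_measurable {f} : L2fun f -> measurable_fun setT f.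
Proof. by case. Qed.

Lemma L2fun_integrable_sqr {f} : L2fun f ->
  mu.-integrable setT (EFin \o (fun x => f x ^+ 2)).
Proof. by case. Qed.

Lemma L2funD {f h} : L2fun f -> L2fun h -> L2fun (fun x => f x + h x).
Proof.
move=> [mf if_] [mh ih]; split; first exact: measurable_funD.
apply: (@integrable_le_EFin _ _ _ mu _ (fun x => 2 * f x ^+ 2 + 2 * h x ^+ 2)).
- by apply: measurable_funX; apply: measurable_funD.
- by apply: integrableD_EFin; apply: integrableZl_EFin.
move=> x; rewrite ger0_norm ?sqr_ge0//.
by have := sqr_ge0 (f x - h x); lra.
Qed.

Lemma L2funZ a {f} : L2fun f -> L2fun (fun x => a * f x).
Proof.
move=> [mf if_]; split; first exact: measurable_funM.
apply: eq_integrable (integrableZl _ (a ^+ 2) if_) => // x _ /=.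
by rewrite exprMn.
Qed.

Lemma L2funB {f h} : L2fun f -> L2fun h -> L2fun (fun x => f x - h x).
Proof.
move=> Lf Lh; have := L2funD Lf (L2funZ (-1) Lh).
by under eq_fun do rewrite mulN1r.
Qed.

Lemma integrable_normM_L2fun {f h} : L2fun f -> L2fun h ->
  mu.-integrable setT (EFin \o (fun x => `|f x| * `|h x|)).
Proof.
move=> [mf if_] [mh ih].
apply: (@integrable_le_EFin _ _ _ mu _ (fun x => f x ^+ 2 + h x ^+ 2)).
- by apply: measurable_funM; apply: measurableT_comp.
- exact: integrableD_EFin.
move=> x; rewrite ger0_norm ?mulr_ge0//.
have := sqr_ge0 (`|f x| - `|h x|).
by rewrite -(real_normK (num_real (f x))) -(real_normK (num_real (h x))); nra.
Qed.

Lemma L2norm_ge0 f : 0 <= L2norm f.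
Proof. exact: sqrtr_ge0. Qed.

Lemma L2norm_sqr f : L2norm f ^+ 2 = Rintegral mu setT (fun x => f x ^+ 2).
Proof. by rewrite sqr_sqrtr//; apply: Rintegral_ge0 => x _; exact: sqr_ge0. Qed.

(* Cauchy-Schwarz: [t |-> \int (t |f| - |h|)^2] is a nonnegative quadratic. *)
Lemma Rintegral_normM_le {f h} : L2fun f -> L2fun h ->
  Rintegral mu setT (fun x => `|f x| * `|h x|) <= L2norm f * L2norm h.
Proof.
move=> Lf Lh; have ifh := integrable_normM_L2fun Lf Lh.
have if2 := L2fun_integrable_sqr Lf; have ih2 := L2fun_integrable_sqr Lh.
apply: le_sqrt_mul_of_quadratic.
- by apply: Rintegral_ge0 => x _; rewrite mulr_ge0.
- by apply: Rintegral_ge0 => x _; exact: sqr_ge0.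
- by apply: Rintegral_ge0 => x _; exact: sqr_ge0.
move=> t; rewrite -mulrA -RintegralZl// -[t ^+ 2 * _]RintegralZl//.
rewrite -RintegralD//; last exact: integrableZl_EFin.
rewrite -RintegralZl//; last exact: integrableZl_EFin.
apply: le_Rintegral => //.
- by do 2 apply: integrableZl_EFin.
- exact/integrableD_EFin/ih2/integrableZl_EFin.
move=> x _; have := sqr_ge0 (t * `|f x| - `|h x|).
by rewrite -(real_normK (num_real (f x))) -(real_normK (num_real (h x))); nra.
Qed.

Lemma L2normD_le {f h} : L2fun f -> L2fun h ->
  L2norm (fun x => f x + h x) <= L2norm f + L2norm h.
Proof.
move=> Lf Lh; have ifh := integrable_normM_L2fun Lf Lh.
have if2 := L2fun_integrable_sqr Lf; have ih2 := L2fun_integrable_sqr Lh.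
rewrite -[leRHS]ger0_norm ?addr_ge0 ?L2norm_ge0// -sqrtr_sqr ler_sqrt ?sqr_ge0//.
apply: (@le_trans _ _ (Rintegral mu setT (fun x => f x ^+ 2 + h x ^+ 2)
     + 2 * Rintegral mu setT (fun x => `|f x| * `|h x|))).
  rewrite -RintegralZl// -RintegralD//; last 2 first.
  - exact: integrableD_EFin.
  - exact: integrableZl_EFin.
  apply: le_Rintegral => //.
  - exact/L2fun_integrable_sqr/L2funD.
  - exact/integrableD_EFin/integrableZl_EFin/ifh/integrableD_EFin.
  move=> x _; have : f x * h x <= `|f x| * `|h x| by rewrite -normrM ler_norm.
  by rewrite sqrrD; lra.
rewrite RintegralD// sqrrD !L2norm_sqr.
by have := Rintegral_normM_le Lf Lh; lra.
Qed.

Lemma L2norm_le_addr_dist {f h} : L2fun f -> L2fun h ->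
  L2norm h <= L2norm f + L2norm (fun x => h x - f x).
Proof.
move=> Lf Lh; have := L2normD_le Lf (L2funB Lh Lf).
by under eq_fun do rewrite addrC subrK.
Qed.

Lemma L2normZ a f : L2fun f -> L2norm (fun x => a * f x) = `|a| * L2norm f.
Proof.
move=> Lf; rewrite /L2norm; under eq_Rintegral do rewrite exprMn.
rewrite RintegralZl//; last exact: L2fun_integrable_sqr.
by rewrite sqrtrM ?sqr_ge0// sqrtr_sqr.
Qed.

Lemma L2normBC f h : L2norm (fun x => f x - h x) = L2norm (fun x => h x - f x).
Proof. by rewrite /L2norm; under eq_Rintegral do rewrite -sqrrN opprB. Qed.

Lemma L2norm_le_H1norm f f' : L2norm f' <= H1norm f f'.
Proof.
rewrite /H1norm -[leLHS]ger0_norm ?L2norm_ge0// -sqrtr_sqr.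
by rewrite ler_sqrt ?addr_ge0 ?sqr_ge0// lerDr sqr_ge0.
Qed.

End L2.

Section cutoff_derivative.
Context {R : realType} {chi : R -> R} (chi_cutoff : cutoff chi).
Local Notation mu := (@lebesgue_measure R).

Lemma derive1_cutoff_out01 x : x < 0 \/ 1 < x -> derive1 chi x = 0.
Proof.
case: chi_cutoff => _ _ chi0 chi1 [x_lt0|x_gt1].
  rewrite derive1E (@near_eq_derive _ _ _ chi (cst 0)) ?derive_cst//.
  by near=> y; apply/chi0/ltW; near: y; exact: lt_nbhsl.
rewrite derive1E (@near_eq_derive _ _ _ chi (cst 1)) ?derive_cst//.
by near=> y; apply/chi1/ltW; near: y; exact: lt_nbhsr.
Unshelve. all: by end_near. Qed.

Lemma continuous_derive1_cutoff : continuous (derive1 chi).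
Proof.
case: chi_cutoff => chi_smooth _ _ _ x.
by apply/differentiable_continuous; rewrite -derivable1_diffP; exact: (chi_smooth 1%N).
Qed.

Lemma derive1_cutoff_le_indic :
  exists M : R, forall x, `|derive1 chi x| <= M * (\1_`[0, 1] x : R).
Proof.
case: chi_cutoff => _ chi'_ge0 _ _.
have [c _ max_c] := EVT_max ler01 (continuous_subspaceT continuous_derive1_cutoff).
exists (derive1 chi c) => x; rewrite indicE.
have [/andP[x_ge0 x_le1]|x_out] := boolP ((0 <= x) && (x <= 1)).
  rewrite mem_set/=; last by rewrite in_itv/= x_ge0 x_le1.
  by rewrite mulr1 ger0_norm//; apply: max_c; rewrite in_itv/= x_ge0 x_le1.
rewrite derive1_cutoff_out01 ?normr0 ?mulr_ge0//.
by move: x_out; rewrite negb_and -!ltNge => /orP.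
Qed.

Lemma L2fun_derive1_cutoff : L2fun (derive1 chi).
Proof.
have [M chi'_le] := derive1_cutoff_le_indic.
have m_chi' := continuous_measurable_fun continuous_derive1_cutoff.
split => //; apply: (@integrable_le_EFin _ _ _ mu _ (fun x => M ^+ 2 * (\1_`[0, 1] x : R))).
- exact: measurable_funX.
- exact/integrableZl_EFin/integrable_indic_itv.
move=> x; rewrite ger0_norm ?sqr_ge0// -real_normK ?num_real//.
have := chi'_le x; rewrite /indic; case: (_ \in _); rewrite ?mulr1 ?mulr0 => chi'x.
  by rewrite lerXn2r// ?nnegrE// (le_trans _ chi'x).
by move: chi'x; rewrite normr_le0 => /eqP->; rewrite normr0 expr0n.
Qed.

Lemma L2fun_ux {ub'} c : L2fun ub' -> L2fun (ux chi ub' c).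
Proof. by move=> Lub'; apply: L2funD Lub' (L2funZ c L2fun_derive1_cutoff). Qed.

End cutoff_derivative.

Section gp_integral.
Context {R : realType}.
Local Notation mu := (@lebesgue_measure R).

Lemma measurable_gp (v r : R -> R) k :
  measurable_fun setT v -> measurable_fun setT r ->
  measurable_fun setT (fun x => gp (v x) (r x) k).
Proof.
move=> mv mr; rewrite /gp /g /Omega1.
have mnorm (f : R -> R) : measurable_fun setT f -> measurable_fun setT (fun x => `|f x|).
  by move=> mf; apply: measurableT_comp => //; exact: normr_measurable.
have mg1 : measurable_fun setT
    (fun x => g1 0 0 0 1 (v x) (v x ^+ 2 + r x ^+ 2) (r x) k).
  apply: measurable_funD; last exact: measurable_cst.
  apply: measurable_funD; first exact: mnorm.
  by apply: measurable_funM => //; apply: mnorm; apply: measurable_funM.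
have mg2 : measurable_fun setT
    (fun x => g2 0 0 0 1 (v x) (v x ^+ 2 + r x ^+ 2) (r x) k).
  by apply: measurable_funD => //; apply: measurable_funD; exact: measurable_funX.
apply: measurable_fun_ifT => //.
apply: measurable_and; first exact: measurable_fun_ler.
apply: measurable_and; first exact: measurable_fun_ler.
by apply: measurable_fun_eqr => //; apply: measurable_funD => //; apply: measurable_funM.
Qed.

Lemma integrable_gp_sub1 {a r : R -> R} k : L2fun a -> L2fun r ->
  mu.-integrable setT (fun x => (gp (a x) (r x) k - 1)%:E).
Proof.
move=> La Lr; apply: (@integrable_le_EFin _ _ _ mu _ (fun x => a x ^+ 2 + r x ^+ 2)).
- apply: measurable_funB => //.
  exact: measurable_gp (L2fun_measurable La) (L2fun_measurable Lr).
- exact: integrableD_EFin (L2fun_integrable_sqr La) (L2fun_integrable_sqr Lr).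
by move=> x; have /andP[gp_ge1 gp_le] := gp_sub1_bounds (a x) (r x) k; rewrite ger0_norm.
Qed.

Lemma L1norm_gp_sub_le {a1 a2 r1 r2 : R -> R} {k1 k2} :
  L2fun a1 -> L2fun a2 -> L2fun r1 -> L2fun r2 -> zero_compat r1 k1 r2 k2 ->
  L1norm (fun x => gp (a1 x) (r1 x) k1 - gp (a2 x) (r2 x) k2)
  <= 2 * (L2norm a1 + L2norm a2 + L2norm r1 + L2norm r2) *
     (L2norm (fun x => a1 x - a2 x) + L2norm (fun x => r1 x - r2 x)).
Proof.
move=> La1 La2 Lr1 Lr2 negl.
have Lda := L2funB La1 La2; have Ldr := L2funB Lr1 Lr2.
set da := (fun x => a1 x - a2 x) in Lda *; set dr := (fun x => r1 x - r2 x) in Ldr *.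
have i1 := integrableZl_EFin 2 (integrable_normM_L2fun La1 Lda).
have i2 := integrableZl_EFin 2 (integrable_normM_L2fun La2 Lda).
have i3 := integrableZl_EFin 2 (integrable_normM_L2fun Lr1 Ldr).
have i4 := integrableZl_EFin 2 (integrable_normM_L2fun Lr2 Ldr).
apply: (@le_trans _ _ (Rintegral mu setT (fun x =>
    2 * (`|a1 x| * `|da x|) + 2 * (`|a2 x| * `|da x|) +
    2 * (`|r1 x| * `|dr x|) + 2 * (`|r2 x| * `|dr x|)))).
  apply: (ae_le_Rintegral _ _ _ _ negl).
  - apply: measurableT_comp; first exact: normr_measurable.
    by apply: measurable_funB; apply: measurable_gp; exact: L2fun_measurable.
  - by do 3 apply: integrableD_EFin => //.
  - by [].
  - by move=> x; rewrite !addr_ge0// !mulr_ge0.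
  move=> x not_mixed; apply: le_trans (gp_dist_le _ _ _ _ _ _ _) _.
    by split=> rk0; apply: contrapT => rk_neq0; apply: not_mixed; [left|right].
  by rewrite /da /dr; lra.
rewrite !RintegralD//; try by do ?apply: integrableD_EFin.
rewrite !RintegralZl //; try exact: integrable_normM_L2fun.
have := Rintegral_normM_le La1 Lda; have := Rintegral_normM_le La2 Lda.
have := Rintegral_normM_le Lr1 Ldr; have := Rintegral_normM_le Lr2 Ldr.
have := L2norm_ge0 da; have := L2norm_ge0 dr.
have := L2norm_ge0 a1; have := L2norm_ge0 a2.
have := L2norm_ge0 r1; have := L2norm_ge0 r2.
nra.
Qed.

End gp_integral.

Lemma squeeze_cvg0_affineM {R : realFieldType} (u e : nat -> R) (P Q : R) :
  (forall n, 0 <= u n <= (P + Q * e n) * e n) -> e @ \oo --> 0 -> u @ \oo --> 0.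
Proof.
move=> u_bounds e0.
apply: (@squeeze_cvgr _ _ _ _ (cst 0) (fun n => (P + Q * e n) * e n)).
- exact: nearW.
- exact: cvg_cst.
rewrite -(mulr0 (P + Q * 0)).
apply: cvgM; last exact: e0.
by apply: cvgD; [exact: cvg_cst|exact: cvgM (cvg_cst Q) e0].
Qed.

Section perturbation.
Context {R : realType} {chi : R -> R} (chi_cutoff : cutoff chi).
Local Notation M := (L2norm (derive1 chi)).

Lemma L2norm_ux_sub_le {ub1' ub2'} c1 c2 : L2fun ub1' -> L2fun ub2' ->
  L2norm (fun x => ux chi ub1' c1 x - ux chi ub2' c2 x)
  <= L2norm (fun x => ub1' x - ub2' x) + `|c1 - c2| * M.
Proof.
move=> Lub1' Lub2'; have Lchi' := L2fun_derive1_cutoff chi_cutoff.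
rewrite -L2normZ//.
have -> : (fun x => ux chi ub1' c1 x - ux chi ub2' c2 x) =
          (fun x => (ub1' x - ub2' x) + (c1 - c2) * derive1 chi x).
  by apply/funext => x; rewrite /ux; ring.
exact: L2normD_le (L2funB Lub1' Lub2') (L2funZ _ Lchi').
Qed.

Lemma L1norm_gfun_sub1_le {ub ub' c rb k ub1 ub1' c1 rb1 k1} {e : R} :
  L2fun ub' -> L2fun rb -> L2fun ub1' -> L2fun rb1 -> zero_compat rb k rb1 k1 ->
  L2norm (fun x => ub1' x - ub' x) <= e -> `|c1 - c| <= e ->
  L2norm (fun x => rb1 x - rb x) <= e ->
  L1norm (fun x => (gfun chi ub1 ub1' c1 rb1 k1 x - 1) - (gfun chi ub ub' c rb k x - 1))
  <= (2 * (2 * L2norm (ux chi ub' c) + 2 * L2norm rb) * (2 + M)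
      + 2 * (2 + M) ^+ 2 * e) * e.
Proof.
move=> Lub' Lrb Lub1' Lrb1 compat dub dc drb.
set A := L2norm (ux chi ub' c); set B := L2norm rb.
have La := L2fun_ux chi_cutoff c Lub'; have La1 := L2fun_ux chi_cutoff c1 Lub1'.
have M0 := L2norm_ge0 (derive1 chi).
have e0 : 0 <= e := le_trans (normr_ge0 _) dc.
have dA : L2norm (fun x => ux chi ub' c x - ux chi ub1' c1 x) <= (1 + M) * e.
  apply: le_trans (L2norm_ux_sub_le c c1 Lub' Lub1') _.
  by rewrite L2normBC distrC; have := ler_wpM2r M0 dc; lra.
have dR : L2norm (fun x => rb x - rb1 x) <= e by rewrite L2normBC.
have nA : L2norm (ux chi ub1' c1) <= A + (1 + M) * e.
  by apply: le_trans (L2norm_le_addr_dist La La1) _; rewrite L2normBC -/A; lra.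
have nB : L2norm rb1 <= B + e.
  by apply: le_trans (L2norm_le_addr_dist Lrb Lrb1) _; rewrite -/B; lra.
have -> : L1norm (fun x => (gfun chi ub1 ub1' c1 rb1 k1 x - 1)
                           - (gfun chi ub ub' c rb k x - 1))
        = L1norm (fun x => gp (ux chi ub' c x) (rb x) k
                           - gp (ux chi ub1' c1 x) (rb1 x) k1).
  by apply: eq_Rintegral => x _; rewrite distrC !gfunE; congr `|_|; ring.
apply: le_trans (L1norm_gp_sub_le La La1 Lrb Lrb1 compat) _.
rewrite [leRHS](_ : _ = 2 * (A + (A + (1 + M) * e) + B + (B + e))
                        * ((1 + M) * e + e)); last by ring.
apply: ler_pM.
- by rewrite mulr_ge0// !addr_ge0 ?L2norm_ge0.
- by rewrite addr_ge0 ?L2norm_ge0.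
- by rewrite ler_wpM2l// !lerD.
- exact: lerD.
Qed.

End perturbation.

Theorem lemma7p2 (R : realType) (chi : R -> R) (Hchi : cutoff chi) :
  (forall (ub ub' : R -> R) (c : R) (rb : R -> R) (k : R),
     H1fun ub ub' -> L2fun rb ->
     (@lebesgue_measure R).-integrable setT
        (fun x => (gfun chi ub ub' c rb k x - 1)%:E))
  /\
  (exists C : R -> R -> R -> R -> R,
     forall (ub1 ub1' : R -> R) (c1 : R) (rb1 : R -> R) (k1 : R)
            (ub2 ub2' : R -> R) (c2 : R) (rb2 : R -> R) (k2 : R),
     H1fun ub1 ub1' -> L2fun rb1 -> H1fun ub2 ub2' -> L2fun rb2 ->
     zero_compat rb1 k1 rb2 k2 ->
     L1norm (fun x => gfun chi ub1 ub1' c1 rb1 k1 x - gfun chi ub2 ub2' c2 rb2 k2 x)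
       <= C (L2norm (ux chi ub1' c1)) (L2norm (ux chi ub2' c2))
            (L2norm rb1) (L2norm rb2)
          * (L2norm (fun x => ux chi ub1' c1 x - ux chi ub2' c2 x)
             + L2norm (fun x => rb1 x - rb2 x)))
  /\
  (forall (ubn ubn' : nat -> R -> R) (cn : nat -> R) (rbn : nat -> R -> R)
          (kn : nat -> R)
          (ub ub' : R -> R) (c : R) (rb : R -> R) (k : R),
     (forall n, H1fun (ubn n) (ubn' n)) -> (forall n, L2fun (rbn n)) ->
     H1fun ub ub' -> L2fun rb ->
     (fun n => H1norm (fun x => ubn n x - ub x) (fun x => ubn' n x - ub' x)
               + `|cn n - c|
               + L2norm (fun x => rbn n x - rb x) + `|kn n - k|) @ \oo --> 0%R ->
     (forall n, zero_compat rb k (rbn n) (kn n)) ->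
     (fun n => L1norm (fun x => (gfun chi (ubn n) (ubn' n) (cn n) (rbn n) (kn n) x - 1)
                                - (gfun chi ub ub' c rb k x - 1))) @ \oo --> 0%R).
Proof.
split; [|split].
- by move=> ub ub' c rb k [_ Lub' _] Lrb; have := integrable_gp_sub1 k (L2fun_ux Hchi c Lub') Lrb.
- exists (fun A1 A2 B1 B2 => 2 * (A1 + A2 + B1 + B2)).
  move=> ub1 ub1' c1 rb1 k1 ub2 ub2' c2 rb2 k2 [_ Lub1' _] Lrb1 [_ Lub2' _] Lrb2.
  exact: L1norm_gp_sub_le (L2fun_ux Hchi c1 Lub1') (L2fun_ux Hchi c2 Lub2') Lrb1 Lrb2.
move=> ubn ubn' cn rbn kn ub ub' c rb k Hn Lrbn [_ Lub' _] Lrb dist_cvg0 compat.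
apply: squeeze_cvg0_affineM dist_cvg0 => n; apply/andP; split.
  exact: Rintegral_ge0.
have [_ Lubn' _] := Hn n.
set dub := H1norm _ _; have dub_ge0 : 0 <= dub := sqrtr_ge0 _.
have := L2norm_le_H1norm (fun x => ubn n x - ub x) (fun x => ubn' n x - ub' x).
have := L2norm_ge0 (fun x => rbn n x - rb x).
have := normr_ge0 (cn n - c); have := normr_ge0 (kn n - k).
rewrite -/dub => *.
by apply: (L1norm_gfun_sub1_le Hchi Lub' Lrb Lubn' (Lrbn n) (compat n)); lra.
Qed.
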